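(* Let $f:\mathbb{R}^n\to\mathbb{R}$ be $L$-smooth and $\mu$-strongly convex with $0<\mu<L$ (Euclidean norm). Then the iterates of Algorithm AGMsDR-SC (either option) satisfy, for every $k\ge0$, $$A_kf(x^k)\le\min_{x\in\mathbb{R}^n}\psi_k(x)=\psi_k(v^k),$$ and for every $k\ge1$, $$A_k\ge\max\left\{\frac{k^2}{4L},\ \frac1L\left(1-\sqrt{\frac{\mu}{L}}\right)^{-(k-1)}\right\}.$$
   Context: $\|\cdot\|=\|\cdot\|_2$ is the Euclidean norm on $\mathbb{R}^n$. $f$ is $L$-smooth if it is continuously differentiable with $\|\nabla f(x)-\nabla f(y)\|_2\le L\|x-y\|_2$ for all $x,y$; $f$ is $\mu$-strongly convex if $f(y)\ge f(x)+\langle\nabla f(x),y-x\rangle+\frac\mu2\|y-x\|_2^2$ for all $x,y$. Algorithm AGMsDR-SC (input $x^0$, and $L$ for Option (a)): set $A_0=0$, $\tau_0=1$, $v^0=x^0$, $\psi_0(x)=\frac12\|x-x^0\|_2^2$. For $k=0,1,2,\dots$: 1. Choose $\beta_k\in\arg\min_{\beta\in[0,1]} f(v^k+\beta(x^k-v^k))$ and set $y^k=v^k+\beta_k(x^k-v^k)$. 2. Option (a): $x^{k+1}=y^k-\frac1L\nabla f(y^k)$, and $a_{k+1}>0$ solves $\frac{a_{k+1}^2}{(\tau_k+\mu a_{k+1})(A_k+a_{k+1})}=\frac1L$. Option (b): $h_{k+1}\in\arg\min_{h\ge0}f\big(y^k-h\,\nabla f(y^k)/\|\nabla f(y^k)\|_2\big)$,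 $x^{k+1}=y^k-h_{k+1}\nabla f(y^k)/\|\nabla f(y^k)\|_2$, and $a_{k+1}$ is the largest solution of $$f(y^k)-\frac{a_{k+1}^2\|\nabla f(y^k)\|_2^2}{2(\tau_k+\mu a_{k+1})(A_k+a_{k+1})}+\frac{\mu\tau_ka_{k+1}\|v^k-y^k\|_2^2}{2(\tau_k+\mu a_{k+1})(A_k+a_{k+1})}=f(x^{k+1}).$$ 3. $A_{k+1}=A_k+a_{k+1}$, $\tau_{k+1}=\tau_k+\mu a_{k+1}$; $\psi_{k+1}(x)=\psi_k(x)+a_{k+1}\{f(y^k)+\langle\nabla f(y^k),x-y^k\rangle+\frac\mu2\|x-y^k\|_2^2\}$; $v^{k+1}=\arg\min_x\psi_{k+1}(x)$. All minima are assumed attained and $\nabla f(y^k)\neq0$ for all iterations considered. *)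

From mathcomp Require Import ssreflect ssrfun ssrbool eqtype ssrnat fintype bigop.
From Stdlib Require Import Reals.
Open Scope R_scope.

Definition vec (n : nat) := 'I_n -> R.

Definition vadd {n} (x y : vec n) : vec n := fun i => x i + y i.
Definition vsub {n} (x y : vec n) : vec n := fun i => x i - y i.
Definition vscale {n} (c : R) (x : vec n) : vec n := fun i => c * x i.

Definition dot {n} (x y : vec n) : R := \big[Rplus/R0]_(i < n) (x i * y i).
Definition norm2 {n} (x : vec n) : R := sqrt (dot x x).

Definition has_gradient_at {n} (f : vec n -> R) (x g : vec n) : Prop :=
  forall eps, 0 < eps -> exists delta, 0 < delta /\
    forall h : vec n, norm2 h < delta ->
      Rabs (f (vadd x h) - f x - dot g h) <= eps * norm2 h.

Definition L_smooth {n} (f : vec n -> R) (gradf : vec n -> vec n) (L : R) : Prop :=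
  (forall x, has_gradient_at f x (gradf x)) /\
  (forall x y, norm2 (vsub (gradf x) (gradf y)) <= L * norm2 (vsub x y)).

Definition strongly_convex {n} (f : vec n -> R) (gradf : vec n -> vec n) (mu : R) : Prop :=
  forall x y, f y >= f x + dot (gradf x) (vsub y x) + mu / 2 * (norm2 (vsub y x)) ^ 2.

Fixpoint psi {n} (f : vec n -> R) (gradf : vec n -> vec n) (mu : R) (x0 : vec n)
    (a : nat -> R) (y : nat -> vec n) (k : nat) (z : vec n) : R :=
  match k with
  | O => 1 / 2 * (norm2 (vsub z x0)) ^ 2
  | S j => psi f gradf mu x0 a y j z
           + a (S j) * (f (y j) + dot (gradf (y j)) (vsub z (y j))
                        + mu / 2 * (norm2 (vsub z (y j))) ^ 2)
  end.

(* One run of AGMsDR-SC.  opt = true: Option (a); opt = false: Option (b). *)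
Definition AGMsDR_SC_run {n} (f : vec n -> R) (gradf : vec n -> vec n) (L mu : R)
    (opt : bool) (x v y : nat -> vec n) (A a tau beta h : nat -> R) : Prop :=
  A 0%nat = 0 /\ tau 0%nat = 1 /\ v 0%nat = x 0%nat /\
  forall k : nat,
    (0 <= beta k <= 1 /\
     (forall b, 0 <= b <= 1 ->
        f (vadd (v k) (vscale (beta k) (vsub (x k) (v k))))
        <= f (vadd (v k) (vscale b (vsub (x k) (v k))))) /\
     y k = vadd (v k) (vscale (beta k) (vsub (x k) (v k)))) /\
    (if opt then
       x (S k) = vsub (y k) (vscale (1 / L) (gradf (y k))) /\
       0 < a (S k) /\
       a (S k) ^ 2 / ((tau k + mu * a (S k)) * (A k + a (S k))) = 1 / L
     else
       let g := gradf (y k) in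
       let d := vscale (1 / norm2 g) g in
       let eqn := fun a' : R =>
         f (y k) - a' ^ 2 * (norm2 g) ^ 2 / (2 * (tau k + mu * a') * (A k + a'))
         + mu * tau k * a' * (norm2 (vsub (v k) (y k))) ^ 2
             / (2 * (tau k + mu * a') * (A k + a'))
         = f (x (S k)) in
       0 <= h (S k) /\
       (forall h', 0 <= h' -> f (vsub (y k) (vscale (h (S k)) d))
                              <= f (vsub (y k) (vscale h' d))) /\
       x (S k) = vsub (y k) (vscale (h (S k)) d) /\
       eqn (a (S k)) /\ (forall a', eqn a' -> a' <= a (S k))) /\
    A (S k) = A k + a (S k) /\
    tau (S k) = tau k + mu * a (S k) /\
    (forall z, psi f gradf mu (x 0%nat) a y (S k) (v (S k))
               <= psi f gradf mu (x 0%nat) a y (S k) z).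

(* The estimate functions psi_k are isotropic quadratics of curvature tau_k = 1 + mu A_k
   centred at v_k.  Completing the square bounds psi_{k+1}(v_{k+1}) from below by
   A_{k+1} f(y_k) + (mu a_{k+1} tau_k |v_k - y_k|^2 - a_{k+1}^2 |grad f(y_k)|^2) / (2 tau_{k+1}),
   using f(y_k) <= f(x_k) and <grad f(y_k), v_k - y_k> >= 0, both consequences of the exact
   line search.  Each option for a_{k+1} makes this bound dominate A_{k+1} f(x_{k+1}): via the
   descent lemma for Option (a), by construction for Option (b).  Both options also give
   L a_{k+1}^2 >= tau_{k+1} A_{k+1}, so sqrt(A_k) grows linearly and, since tau_k >= mu A_k,
   A_k grows geometrically. *)

From HB Require Import structures.
From mathcomp Require Import ssreflect ssrfun ssrbool eqtype ssrnat fintype bigop.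
From Stdlib Require Import Reals Lra Psatz FunctionalExtensionality.
Open Scope R_scope.

HB.instance Definition _ := Monoid.isComLaw.Build R R0 Rplus
  (fun a b c => esym (Rplus_assoc a b c)) Rplus_comm Rplus_0_l.

Ltac vec_ext := apply: functional_extensionality => ?; rewrite /vadd /vsub /vscale; ring.

Section InnerProduct.
Context {n : nat}.
Implicit Types x y z : vec n.

Lemma dot_comm x y : dot x y = dot y x.
Proof. by apply: eq_bigr => i _; rewrite Rmult_comm. Qed.

Lemma dot_addl x y z : dot (vadd x y) z = dot x z + dot y z.
Proof. by rewrite /dot -big_split; apply: eq_bigr => i _; rewrite /vadd Rmult_plus_distr_r. Qed.

Lemma dot_scalel c x z : dot (vscale c x) z = c * dot x z.
Proof.
rewrite /dot (big_endo (Rmult c) (Rmult_plus_distr_l c) (Rmult_0_r c)).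
by apply: eq_bigr => i _; rewrite /vscale Rmult_assoc.
Qed.

Lemma dot_subl x y z : dot (vsub x y) z = dot x z - dot y z.
Proof.
have -> : vsub x y = vadd x (vscale (-1) y) by vec_ext.
rewrite dot_addl dot_scalel; ring.
Qed.

Lemma dot_addr x y z : dot z (vadd x y) = dot z x + dot z y.
Proof. by rewrite dot_comm dot_addl !(dot_comm z). Qed.

Lemma dot_subr x y z : dot z (vsub x y) = dot z x - dot z y.
Proof. by rewrite dot_comm dot_subl !(dot_comm z). Qed.

Lemma dot_scaler c x z : dot z (vscale c x) = c * dot z x.
Proof. by rewrite dot_comm dot_scalel (dot_comm x). Qed.

Lemma dot_sub_sq x y : dot (vsub x y) (vsub x y) = dot x x - 2 * dot x y + dot y y.
Proof. rewrite !dot_subl !dot_subr (dot_comm y x); ring. Qed.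

Lemma dot_ge0 x : 0 <= dot x x.
Proof. apply: big_ind => [|a b|i _]; [lra | lra | exact: Rle_0_sqr]. Qed.

Lemma dot_self_eq0 x : dot x x = 0 -> x = (fun _ => 0).
Proof.
move=> x0; apply: functional_extensionality => i.
move: x0; rewrite /dot (bigD1 i) //=; set rest := bigop _ _ _ => x0.
have rest_ge0 : 0 <= rest by apply: big_ind => [|a b|j _]; [lra | lra | exact: Rle_0_sqr].
have sq0 : x i * x i = 0 by clearbody rest; nra.
by case: (Rmult_integral _ _ sq0).
Qed.

Lemma dot_self_gt0 x : x <> (fun _ => 0) -> 0 < dot x x.
Proof.
move=> xn0; case: (Rle_lt_or_eq_dec _ _ (dot_ge0 x)) => // x0.
by case: xn0; apply: dot_self_eq0.
Qed.

Lemma norm2_ge0 x : 0 <= norm2 x.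
Proof. exact: sqrt_pos. Qed.

Lemma norm2_sq x : norm2 x ^ 2 = dot x x.
Proof. exact/pow2_sqrt/dot_ge0. Qed.

Lemma norm2_scale c x : norm2 (vscale c x) = Rabs c * norm2 x.
Proof.
rewrite /norm2 dot_scalel dot_scaler -Rmult_assoc sqrt_mult ?sqrt_Rsqr_abs //.
  exact: Rle_0_sqr.
exact: dot_ge0.
Qed.

Lemma dot_norm2_eq0 x y : norm2 x = 0 -> dot x y = 0.
Proof.
move=> x0; have : dot x x = 0 by rewrite -norm2_sq x0; ring.
move/dot_self_eq0 => ->; rewrite /dot big1 // => i _; exact: Rmult_0_l.
Qed.

(* Expand the square [| |y| x - |x| y |^2 >= 0]. *)
Lemma cauchy_schwarz x y : dot x y <= norm2 x * norm2 y.
Proof.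
have := dot_ge0 (vsub (vscale (norm2 y) x) (vscale (norm2 x) y)).
rewrite dot_sub_sq !dot_scalel !dot_scaler -!norm2_sq.
have := norm2_ge0 x; have := norm2_ge0 y.
case: (Req_dec (norm2 x * norm2 y) 0) => [nxy0|]; last by nra.
case: (Rmult_integral _ _ nxy0) => [/dot_norm2_eq0 -> | /dot_norm2_eq0 y0].
  by rewrite nxy0; lra.
by rewrite dot_comm y0 nxy0; lra.
Qed.

End InnerProduct.

Section Quadratics.
Context {n : nat}.
Implicit Types (y z v w g m : vec n).

Lemma isotropic_quadratic_argmin (Q : vec n -> R) K t m w : 0 < t ->
  (forall z, Q z = K + t / 2 * dot (vsub z m) (vsub z m)) -> (forall z, Q w <= Q z) ->
  forall z, Q z = Q w + t / 2 * dot (vsub z w) (vsub z w).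
Proof.
move=> t_gt0 Q_eq w_min.
have w_m : dot (vsub w m) (vsub w m) = 0.
  have := w_min m; have := dot_ge0 (vsub w m).
  rewrite !Q_eq (dot_sub_sq m m); nra.
have -> : w = m.
  apply: functional_extensionality => i.
  by have := f_equal (fun u => u i) (dot_self_eq0 _ w_m); rewrite /vsub /=; lra.
by move=> z; rewrite !Q_eq (dot_sub_sq m m); ring.
Qed.

Lemma estimate_update_isotropic tau mu a v y g : 0 < tau + mu * a ->
  exists K m, forall z,
    tau / 2 * dot (vsub z v) (vsub z v)
      + a * (dot g (vsub z y) + mu / 2 * dot (vsub z y) (vsub z y))
    = K + (tau + mu * a) / 2 * dot (vsub z m) (vsub z m).
Proof.
move=> tau'_gt0.
set m := vscale (1 / (tau + mu * a)) (vsub (vadd (vscale tau v) (vscale (a * mu) y)) (vscale a g)).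
exists (tau / 2 * dot v v + a * mu / 2 * dot y y - a * dot g y - (tau + mu * a) / 2 * dot m m), m.
move=> z; rewrite !dot_sub_sq dot_subr.
have -> : dot z m = (tau * dot z v + a * mu * dot z y - a * dot z g) / (tau + mu * a).
  by rewrite /m dot_scaler dot_subr dot_addr !dot_scaler /Rdiv Rmult_1_l Rmult_comm.
rewrite (dot_comm g z); field; lra.
Qed.

(* Expand [| (tau + mu a) d - (tau w - a g) |^2 >= 0], with [d = z - y] and [w = v - y]. *)
Lemma estimate_update_lower_bound tau mu a d w g : 0 < tau -> 0 <= a -> 0 < mu ->
  (mu * a * tau * dot w w + 2 * tau * a * dot g w - a ^ 2 * dot g g) / (2 * (tau + mu * a))
  <= tau / 2 * dot (vsub d w) (vsub d w) + a * (dot g d + mu / 2 * dot d d).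
Proof.
move=> tau_gt0 a_ge0 mu_gt0.
have := dot_ge0 (vsub (vscale (tau + mu * a) d) (vsub (vscale tau w) (vscale a g))).
rewrite !dot_subl !dot_subr !dot_scalel !dot_scaler.
rewrite (dot_comm w d) (dot_comm g d) (dot_comm g w) => sq_ge0.
have tau'_gt0 : 0 < 2 * (tau + mu * a) by nra.
apply: (Rmult_le_reg_r (2 * (tau + mu * a))) => //.
rewrite /Rdiv Rmult_assoc Rinv_l; nra.
Qed.

End Quadratics.

Lemma derivable_left_min_le0 (phi : R -> R) t l delta :
  derivable_pt_lim phi t l -> 0 < delta ->
  (forall s, t - delta < s < t -> phi t <= phi s) -> l <= 0.
Proof.
move=> dphi delta_gt0 left_min; apply: Rnot_lt_le => l_gt0.
have [[e e_gt0] close] := dphi l l_gt0.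
have := Rmin_glb_lt _ _ _ delta_gt0 e_gt0; have := Rmin_l delta e; have := Rmin_r delta e.
set hh := - (Rmin delta e / 2) => min_e min_delta min_gt0.
have hh_lt0 : hh < 0 by rewrite /hh; lra.
have := close hh (Rlt_not_eq _ _ hh_lt0); rewrite Rabs_left /=; last by rewrite /hh; lra.
set q := (phi (t + hh) - phi t) / hh => q_close.
have diff_eq : phi (t + hh) - phi t = q * hh by rewrite /q; field; lra.
have q_gt0 : 0 < q.
  by case/Rabs_def2: (q_close ltac:(rewrite /hh; lra)); lra.
have := left_min (t + hh) ltac:(rewrite /hh; lra).
clearbody q hh; nra.
Qed.

Section Smooth.
Context {n : nat}.
Implicit Types (f : vec n -> R) (gradf : vec n -> vec n).

Lemma has_gradient_at_line f y d t g :
  has_gradient_at f (vadd y (vscale t d)) g ->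
  derivable_pt_lim (fun s => f (vadd y (vscale s d))) t (dot g d).
Proof.
move=> grad eps eps_gt0.
set p := vadd y (vscale t d); set nd := norm2 d.
have nd_ge0 : 0 <= nd := norm2_ge0 d.
set e := eps / (nd + 1).
have e_eq : e * (nd + 1) = eps by rewrite /e; field; lra.
have e_gt0 : 0 < e by rewrite /e; apply: Rdiv_lt_0_compat; lra.
have [delta [delta_gt0 approx]] := grad e e_gt0.
have step_gt0 : 0 < delta / (nd + 1) by apply: Rdiv_lt_0_compat; lra.
exists (mkposreal _ step_gt0) => hh hh_neq0 /= hh_small.
have -> : vadd y (vscale (t + hh) d) = vadd p (vscale hh d) by rewrite /p; vec_ext.
have abs_gt0 : 0 < Rabs hh := Rabs_pos_lt _ hh_neq0.
have small : Rabs hh * (nd + 1) < delta.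
  have := Rmult_lt_compat_r (nd + 1) _ _ ltac:(lra) hh_small.
  by rewrite /Rdiv Rmult_assoc Rinv_l ?Rmult_1_r; lra.
have := approx (vscale hh d); rewrite norm2_scale dot_scaler -/nd => /(_ ltac:(nra)).
set E := f (vadd p (vscale hh d)) - f p - hh * dot g d => E_small.
have -> : (f (vadd p (vscale hh d)) - f p) / hh - dot g d = E / hh by rewrite /E; field.
rewrite /Rdiv Rabs_mult Rabs_inv; apply: (Rmult_lt_reg_r (Rabs hh)) => //.
rewrite Rmult_assoc Rinv_l; last lra.
clearbody E; nra.
Qed.

Lemma line_search_first_order f g x v beta :
  has_gradient_at f (vadd v (vscale beta (vsub x v))) g -> 0 <= beta <= 1 ->
  (forall b, 0 <= b <= 1 ->
     f (vadd v (vscale beta (vsub x v))) <= f (vadd v (vscale b (vsub x v)))) ->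
  0 <= dot g (vsub v (vadd v (vscale beta (vsub x v)))).
Proof.
move=> grad [beta_ge0 beta_le1] seg_min.
have -> : vsub v (vadd v (vscale beta (vsub x v))) = vscale (- beta) (vsub x v) by vec_ext.
rewrite dot_scaler; case: (Req_dec beta 0) => [-> | beta_neq0]; first lra.
suff : dot g (vsub x v) <= 0 by nra.
apply: (derivable_left_min_le0 _ _ _ beta (has_gradient_at_line _ _ _ _ _ grad)); first lra.
by move=> s s_range; apply: seg_min; lra.
Qed.

(* The mean value theorem applied to [s |-> f (y + s d) - (L/2) |d|^2 s^2 - <grad f y, d> s]. *)
Lemma descent_lemma f gradf L : L_smooth f gradf L -> forall y d,
  f (vadd y d) <= f y + dot (gradf y) d + L / 2 * dot d d.
Proof.
move=> [grad lip] y d.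
set a1 := dot (gradf y) d; set a2 := L / 2 * dot d d.
pose phi s := f (vadd y (vscale s d)) - a2 * s ^ 2 - a1 * s.
(* [dphi] is written in the shape produced by the derivative rules for [^] and [*]. *)
pose dphi c := dot (gradf (vadd y (vscale c d))) d - a2 * (INR 2 * c ^ Nat.pred 2) - a1 * 1.
have phi_deriv c : 0 <= c <= 1 -> derivable_pt_lim phi c (dphi c).
  move=> _; apply: derivable_pt_lim_minus; first apply: derivable_pt_lim_minus.
  - exact: has_gradient_at_line.
  - exact: derivable_pt_lim_scal (derivable_pt_lim_pow c 2).
  - exact: derivable_pt_lim_scal (derivable_pt_lim_id c).
have [c [mvt [c_gt0 c_lt1]]] := MVT_cor2 phi dphi 0 1 Rlt_0_1 phi_deriv.
have dphi_le0 : dphi c <= 0.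
  have := cauchy_schwarz (vsub (gradf (vadd y (vscale c d))) (gradf y)) d.
  have := lip (vadd y (vscale c d)) y.
  have -> : vsub (vadd y (vscale c d)) y = vscale c d by vec_ext.
  rewrite norm2_scale Rabs_pos_eq ?dot_subl; last lra.
  have := norm2_ge0 d; have := norm2_sq d.
  have := norm2_ge0 (vsub (gradf (vadd y (vscale c d))) (gradf y)).
  rewrite /dphi /a2 /= -/a1; nra.
have -> : vadd y d = vadd y (vscale 1 d) by vec_ext.
have y0 : y = vadd y (vscale 0 d) by vec_ext.
rewrite {2}y0 -/a1 -/a2; move: mvt; rewrite /phi /=; nra.
Qed.

Lemma gradient_step_descent f gradf L y : 0 < L -> L_smooth f gradf L ->
  f (vsub y (vscale (1 / L) (gradf y))) <= f y - dot (gradf y) (gradf y) / (2 * L).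
Proof.
move=> L_gt0 smooth; have := descent_lemma _ _ _ smooth y (vscale (- (1 / L)) (gradf y)).
have -> : vadd y (vscale (- (1 / L)) (gradf y)) = vsub y (vscale (1 / L) (gradf y)) by vec_ext.
rewrite dot_scalel !dot_scaler => descent.
apply: (Rle_trans _ _ _ descent); apply: Req_le; field; lra.
Qed.

Lemma strongly_convex_lower_bound f gradf mu y z : 0 < mu -> strongly_convex f gradf mu ->
  f y - dot (gradf y) (gradf y) / (2 * mu) <= f z.
Proof.
move=> mu_gt0 /(_ y z); rewrite norm2_sq => sc.
have := dot_ge0 (vadd (gradf y) (vscale mu (vsub z y))).
rewrite !dot_addl !dot_addr !dot_scalel !dot_scaler (dot_comm (vsub z y)).
move: sc; set G := dot (gradf y) (gradf y); set gd := dot (gradf y) (vsub z y).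
set D := dot (vsub z y) (vsub z y) => sc sq_ge0.
suff : 0 <= G / (2 * mu) + gd + mu / 2 * D by lra.
have -> : G / (2 * mu) + gd + mu / 2 * D = (G + mu * gd + mu * gd + mu * (mu * D)) / (2 * mu).
  by field; lra.
apply: Rmult_le_pos; [lra | apply/Rlt_le/Rinv_0_lt_compat; lra].
Qed.

End Smooth.

Lemma concave_quadratic_pos_root c2 c1 c0 : c2 < 0 -> 0 <= c0 -> 0 < c1 ->
  exists r, 0 < r /\ c2 * r ^ 2 + c1 * r + c0 = 0.
Proof.
move=> c2_lt0 c0_ge0 c1_gt0.
set D := c1 ^ 2 - 4 * c2 * c0.
have D_ge : c1 ^ 2 <= D by rewrite /D; nra.
have sqrtD_ge : c1 <= sqrt D.
  by rewrite -(sqrt_pow2 c1); [apply: sqrt_le_1_alt | lra].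
exists ((c1 + sqrt D) / (- 2 * c2)); split.
  by apply: Rdiv_lt_0_compat; lra.
have c0_eq : c0 = (c1 ^ 2 - D) / (4 * c2) by rewrite /D; field; lra.
have := sqrt_sqrt D ltac:(nra); move: (sqrt D) => s s_sq.
rewrite c0_eq -s_sq; field; lra.
Qed.

Lemma step_size_monotone L mu tau A r s : mu <= L -> 0 <= mu -> 0 <= tau -> 0 <= A ->
  0 < r <= s -> (tau + mu * r) * (A + r) <= L * r ^ 2 ->
  (tau + mu * s) * (A + s) <= L * s ^ 2.
Proof.
move=> mu_le_L mu_ge0 tau_ge0 A_ge0 [r_gt0 r_le_s] r_ok.
have slope : tau + mu * A <= (L - mu) * r.
  apply: (Rmult_le_reg_r r) => //; nra.
have : 0 <= (s - r) * ((L - mu) * r - (tau + mu * A)) by apply: Rmult_le_pos; lra.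
have : 0 <= (s - r) * ((L - mu) * s) by apply: Rmult_le_pos; nra.
nra.
Qed.

(* Cleared of denominators, the equation of Option (b) is a concave quadratic in [a'] with a
   positive root [r]; at [r], the sufficient decrease [fx <= fy - G / (2 L)] already forces
   [(tau + mu r) (A + r) <= L r^2]. *)
Lemma largest_root_step_size L mu tau A fy fx G W amax :
  0 < mu -> mu < L -> 0 < tau -> 0 <= A -> 0 < G -> 0 <= W ->
  fx <= fy - G / (2 * L) -> fy - G / (2 * mu) < fx ->
  (forall a', fy - a' ^ 2 * G / (2 * (tau + mu * a') * (A + a'))
       + mu * tau * a' * W / (2 * (tau + mu * a') * (A + a')) = fx -> a' <= amax) ->
  0 < amax /\ (tau + mu * amax) * (A + amax) <= L * amax ^ 2.
Proof.
move=> mu_gt0 mu_lt_L tau_gt0 A_ge0 G_gt0 W_ge0 fx_le fx_gt largest.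
set e := fy - fx.
have e_lo : G <= 2 * L * e.
  have : 2 * L * (G / (2 * L)) = G by field; lra.
  move: fx_le; rewrite /e; move: (G / (2 * L)) => q; nra.
have e_hi : 2 * mu * e < G.
  have : 2 * mu * (G / (2 * mu)) = G by field; lra.
  move: fx_gt; rewrite /e; move: (G / (2 * mu)) => q; nra.
have e_gt0 : 0 < e by nra.
have c0_ge0 : 0 <= 2 * e * tau * A by apply: Rmult_le_pos; nra.
have muW_ge0 : 0 <= mu * tau * W by apply: Rmult_le_pos; nra.
have c1_gt0 : 0 < 2 * e * (tau + mu * A) + mu * tau * W.
  have : 0 < 2 * e * (tau + mu * A) by apply: Rmult_lt_0_compat; nra.
  lra.
have c2_lt0 : 2 * mu * e - G < 0 by lra.
have [r [r_gt0 root]] := concave_quadratic_pos_root _ _ _ c2_lt0 c0_ge0 c1_gt0.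
have tau'_gt0 : 0 < tau + mu * r by nra.
have den_gt0 : 0 < (tau + mu * r) * (A + r) by apply: Rmult_lt_0_compat; lra.
have root_eq : 2 * e * ((tau + mu * r) * (A + r)) = r ^ 2 * G - mu * tau * r * W by nra.
have r_le : r <= amax.
  apply: largest.
  have -> : fy - r ^ 2 * G / (2 * (tau + mu * r) * (A + r))
      + mu * tau * r * W / (2 * (tau + mu * r) * (A + r))
    = fy - (r ^ 2 * G - mu * tau * r * W) / (2 * ((tau + mu * r) * (A + r))).
    by field; split; lra.
  by rewrite -root_eq /e; field; split; lra.
split; first lra.
apply: (step_size_monotone _ _ _ _ r); try lra.
have : 0 <= mu * tau * r * W by rewrite (Rmult_comm _ r) Rmult_assoc; nra.
move: root_eq; move: ((tau + mu * r) * (A + r)) => Q; nra.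
Qed.

Lemma ratio_eq_inv L D s : 0 < L -> 0 < D -> s / D = 1 / L -> D = L * s.
Proof.
move=> L_gt0 D_gt0 ratio.
have -> : s = s / D * D by field; lra.
by rewrite ratio; field; lra.
Qed.

Lemma value_bound_fixed_step L mu tau A a fy fx G W :
  0 < L -> 0 < mu -> 0 < tau -> 0 <= A -> 0 < a -> 0 <= W ->
  a ^ 2 / ((tau + mu * a) * (A + a)) = 1 / L -> fx <= fy - G / (2 * L) ->
  (A + a) * fx <= (A + a) * fy + (mu * a * tau * W - a ^ 2 * G) / (2 * (tau + mu * a)).
Proof.
move=> L_gt0 mu_gt0 tau_gt0 A_ge0 a_gt0 W_ge0 a_eq fx_le.
have tau'_gt0 : 0 < tau + mu * a by nra.
have D_gt0 : 0 < (tau + mu * a) * (A + a) by apply: Rmult_lt_0_compat; lra.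
have a_sq : a ^ 2 = (tau + mu * a) * (A + a) / L.
  by rewrite (ratio_eq_inv _ _ _ L_gt0 D_gt0 a_eq); field; lra.
have -> : (mu * a * tau * W - a ^ 2 * G) / (2 * (tau + mu * a))
        = mu * a * tau * W / (2 * (tau + mu * a)) - (A + a) * (G / (2 * L)).
  by rewrite a_sq; field; lra.
have : 0 <= mu * a * tau * W / (2 * (tau + mu * a)).
  apply: Rmult_le_pos; last by apply/Rlt_le/Rinv_0_lt_compat; lra.
  by repeat apply: Rmult_le_pos; lra.
have : (A + a) * fx <= (A + a) * (fy - G / (2 * L)) by apply: Rmult_le_compat_l; lra.
lra.
Qed.

Lemma value_bound_largest_root mu tau A a fy fx G W :
  0 < mu -> 0 < tau -> 0 <= A -> 0 < a ->
  fy - a ^ 2 * G / (2 * (tau + mu * a) * (A + a))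
     + mu * tau * a * W / (2 * (tau + mu * a) * (A + a)) = fx ->
  (A + a) * fx = (A + a) * fy + (mu * a * tau * W - a ^ 2 * G) / (2 * (tau + mu * a)).
Proof.
move=> mu_gt0 tau_gt0 A_ge0 a_gt0 <-.
have tau'_gt0 : 0 < tau + mu * a by nra.
by field; split; lra.
Qed.

(* With [s = sqrt (4 L A')]: [L a^2 >= A'] gives [2 L a >= s], so [k^2 <= 4 L A <= s^2 - 2 s]. *)
Lemma growth_sqrt_step L A a k : 0 < L -> 0 <= k -> 0 < a ->
  k ^ 2 <= 4 * L * A -> A + a <= L * a ^ 2 -> (k + 1) ^ 2 <= 4 * L * (A + a).
Proof.
move=> L_gt0 k_ge0 a_gt0 k_le A'_le.
have := sqrt_sqrt (4 * L * (A + a)) ltac:(nra); have := sqrt_pos (4 * L * (A + a)).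
move: (sqrt _) => s s_ge0 s_sq.
have s_le : s <= 2 * L * a.
  have : s * s <= (2 * L * a) * (2 * L * a) by nra.
  have : 0 < 2 * L * a by nra.
  nra.
have k_sq : k ^ 2 <= s ^ 2 - 2 * s by nra.
have s_ge2 : 2 <= s.
  have : 0 < s * s by rewrite s_sq; nra.
  nra.
have k_le_s : k <= s - 1 by apply: Rnot_lt_le => ?; nra.
nra.
Qed.

(* [mu A'^2 <= L a^2] means [a >= sqrt (mu / L) A']. *)
Lemma growth_linear_step L mu A a : 0 < mu -> mu < L -> 0 < a ->
  mu * (A + a) ^ 2 <= L * a ^ 2 -> A <= (1 - sqrt (mu / L)) * (A + a).
Proof.
move=> mu_gt0 mu_lt_L a_gt0 A'_le.
have := sqrt_sqrt (mu / L) ltac:(apply: Rlt_le; apply: Rdiv_lt_0_compat; lra).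
have := sqrt_pos (mu / L); move: (sqrt _) => q q_ge0 q_sq.
have L_q : L * (q * q) = mu by rewrite q_sq; field; lra.
suff : q * (A + a) <= a by lra.
have : (q * (A + a)) ^ 2 <= a ^ 2.
  apply: (Rmult_le_reg_l L); first lra.
  by move: A'_le; rewrite -L_q; nra.
case: (Rle_or_lt (q * (A + a)) 0) => ?; nra.
Qed.

Section AGMsDR_SC.
Context {n : nat} {f : vec n -> R} {gradf : vec n -> vec n} {L mu : R} {opt : bool}
  {x v y : nat -> vec n} {A a tau beta h : nat -> R}.
Hypotheses (mu_gt0 : 0 < mu) (mu_lt_L : mu < L) (smooth : L_smooth f gradf L)
  (strong : strongly_convex f gradf mu) (grad_neq0 : forall k, gradf (y k) <> (fun _ => 0))
  (run : AGMsDR_SC_run f gradf L mu opt x v y A a tau beta h).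

Local Notation Psi := (psi f gradf mu (x 0%nat) a y).
Local Notation g k := (gradf (y k)).
Local Notation G k := (dot (g k) (g k)).

Let L_gt0 : 0 < L. Proof. lra. Qed.

Lemma f_y_le_f_x k : f (y k) <= f (x k).
Proof.
have [_ [_ [_ /(_ k) [[_ [seg_min y_eq]] _]]]] := run.
have := seg_min 1 ltac:(lra).
have -> : vadd (v k) (vscale 1 (vsub (x k) (v k))) = x k by vec_ext.
by rewrite -y_eq.
Qed.

Lemma line_search_gap k : 0 <= dot (g k) (vsub (v k) (y k)).
Proof.
have [_ [_ [_ /(_ k) [[beta_range [seg_min y_eq]] _]]]] := run.
by rewrite y_eq; apply: (line_search_first_order f) => //; apply: smooth.1.
Qed.

Lemma descent_step k : f (x (S k)) <= f (y k) - G k / (2 * L).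
Proof.
have [_ [_ [_ /(_ k) [_ [step _]]]]] := run.
case: opt step => [[-> _] | [_ [ray_min [-> _]]]]; first exact: gradient_step_descent.
have g_norm_gt0 : 0 < norm2 (g k) by apply/sqrt_lt_R0/dot_self_gt0.
apply: Rle_trans (ray_min (norm2 (g k) / L) _) _.
  by apply/Rlt_le/Rdiv_lt_0_compat.
have -> : vscale (norm2 (g k) / L) (vscale (1 / norm2 (g k)) (g k)) = vscale (1 / L) (g k).
  by apply: functional_extensionality => i; rewrite /vscale; field; lra.
exact: gradient_step_descent.
Qed.

(* Were it otherwise, [x (S k)] would minimize [f], yet the gradient step from [y (S k)],
   which is no worse than [x (S k)], strictly decreases [f]. *)
Lemma descent_step_strict k : f (y k) - G k / (2 * mu) < f (x (S k)).
Proof.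
apply: Rnot_le_lt => x_low.
have := gradient_step_descent _ _ _ (y (S k)) L_gt0 smooth.
have := strongly_convex_lower_bound _ _ _ (y k) (vsub (y (S k)) (vscale (1 / L) (g (S k))))
  mu_gt0 strong.
have := f_y_le_f_x (S k).
have : 0 < G (S k) / (2 * L) by apply: Rdiv_lt_0_compat; [exact: dot_self_gt0 | lra].
lra.
Qed.

Lemma step_size k : 0 < tau k -> 0 <= A k ->
  0 < a (S k) /\ (tau k + mu * a (S k)) * (A k + a (S k)) <= L * a (S k) ^ 2.
Proof.
move=> tau_gt0 A_ge0.
have [_ [_ [_ /(_ k) [_ [step _]]]]] := run.
case: opt step => [[_ [a_gt0 a_eq]] | [_ [_ [_ [_ largest]]]]].
  split => //; apply: Req_le; apply: ratio_eq_inv a_eq => //.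
  by apply: Rmult_lt_0_compat; nra.
apply: largest_root_step_size largest => //; rewrite ?norm2_sq.
- exact: dot_self_gt0.
- exact: dot_ge0.
- exact: descent_step.
- exact: descent_step_strict.
Qed.

Lemma value_step k : 0 < tau k -> 0 <= A k ->
  A (S k) * f (x (S k)) <= A (S k) * f (y k)
    + (mu * a (S k) * tau k * dot (vsub (v k) (y k)) (vsub (v k) (y k)) - a (S k) ^ 2 * G k)
      / (2 * (tau k + mu * a (S k))).
Proof.
move=> tau_gt0 A_ge0.
have [a_gt0 _] := step_size k tau_gt0 A_ge0.
have [_ [_ [_ /(_ k) [_ [step [-> _]]]]]] := run.
case: opt step => [[_ [_ a_eq]] | [_ [_ [_ [a_eq _]]]]].
  apply: value_bound_fixed_step a_eq _ => //; first exact: dot_ge0.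
  exact: descent_step.
by apply/Req_le/value_bound_largest_root; rewrite -?norm2_sq.
Qed.

Lemma psi_succ k z : Psi (S k) z = Psi k z
  + a (S k) * (f (y k) + dot (g k) (vsub z (y k)) + mu / 2 * dot (vsub z (y k)) (vsub z (y k))).
Proof. by rewrite -norm2_sq. Qed.

Lemma psi_succ_isotropic k : 0 < tau k + mu * a (S k) ->
  (forall z, Psi k z = Psi k (v k) + tau k / 2 * dot (vsub z (v k)) (vsub z (v k))) ->
  forall z, Psi (S k) z
    = Psi (S k) (v (S k)) + (tau k + mu * a (S k)) / 2 * dot (vsub z (v (S k))) (vsub z (v (S k))).
Proof.
move=> tau'_gt0 psi_k.
have [_ [_ [_ /(_ k) [_ [_ [_ [_ v_min]]]]]]] := run.
have [K [m completion]] := estimate_update_isotropic _ _ _ (v k) (y k) (g k) tau'_gt0.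
apply: (isotropic_quadratic_argmin _ (Psi k (v k) + a (S k) * f (y k) + K) _ m) => // z.
by rewrite psi_succ psi_k (Rplus_assoc _ K) -completion; ring.
Qed.

Lemma psi_succ_lower k : 0 < tau k -> 0 <= A k -> 0 < a (S k) ->
  A k * f (x k) <= Psi k (v k) ->
  (forall z, Psi k z = Psi k (v k) + tau k / 2 * dot (vsub z (v k)) (vsub z (v k))) ->
  A (S k) * f (y k)
    + (mu * a (S k) * tau k * dot (vsub (v k) (y k)) (vsub (v k) (y k)) - a (S k) ^ 2 * G k)
      / (2 * (tau k + mu * a (S k)))
  <= Psi (S k) (v (S k)).
Proof.
move=> tau_gt0 A_ge0 a_gt0 value_k psi_k.
have [_ [_ [_ /(_ k) [_ [_ [-> _]]]]]] := run.
have := estimate_update_lower_bound _ _ _ (vsub (v (S k)) (y k)) (vsub (v k) (y k)) (g k)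
  tau_gt0 (Rlt_le _ _ a_gt0) mu_gt0.
have -> : vsub (vsub (v (S k)) (y k)) (vsub (v k) (y k)) = vsub (v (S k)) (v k) by vec_ext.
rewrite psi_succ psi_k.
set W := dot (vsub (v k) (y k)) _; set gap := dot (g k) (vsub (v k) (y k)).
set dg := dot (g k) (vsub (v (S k)) (y k)); set e := mu / 2 * _.
have gap_term : 0 <= tau k * a (S k) * gap / (tau k + mu * a (S k)).
  apply: Rmult_le_pos; last by apply/Rlt_le/Rinv_0_lt_compat; nra.
  by apply: Rmult_le_pos; [nra | exact: line_search_gap].
have : A k * f (y k) <= A k * f (x k) by apply/Rmult_le_compat_l/f_y_le_f_x.
have -> : a (S k) * (f (y k) + dg + e) = a (S k) * f (y k) + a (S k) * (dg + e) by ring.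
have -> : (mu * a (S k) * tau k * W + 2 * tau k * a (S k) * gap - a (S k) ^ 2 * G k)
    / (2 * (tau k + mu * a (S k)))
  = (mu * a (S k) * tau k * W - a (S k) ^ 2 * G k) / (2 * (tau k + mu * a (S k)))
    + tau k * a (S k) * gap / (tau k + mu * a (S k)).
  by field; nra.
lra.
Qed.

Lemma estimate_invariant k :
  [/\ tau k = 1 + mu * A k, 0 <= A k, A k * f (x k) <= Psi k (v k)
    & forall z, Psi k z = Psi k (v k) + tau k / 2 * dot (vsub z (v k)) (vsub z (v k))].
Proof.
elim: k => [|k [tau_k A_ge0 value_k psi_k]].
  have [-> [-> [v0 _]]] := run.
  have psi0 z : Psi 0 z = 1 / 2 * dot (vsub z (x 0%nat)) (vsub z (x 0%nat)).
    by rewrite -norm2_sq.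
  have psi0_v : Psi 0 (v 0%nat) = 0 by rewrite psi0 v0 dot_sub_sq; ring.
  by split => [|||z]; rewrite ?psi0_v ?psi0 ?v0; [ring | lra | lra | ring].
have tau_gt0 : 0 < tau k by nra.
have [a_gt0 _] := step_size k tau_gt0 A_ge0.
have [_ [_ [_ /(_ k) [_ [_ [A_succ [tau_succ _]]]]]]] := run.
split.
- by rewrite tau_succ A_succ tau_k; ring.
- by rewrite A_succ; lra.
- apply: Rle_trans (value_step k tau_gt0 A_ge0) _.
  exact: psi_succ_lower.
- by rewrite tau_succ; apply: psi_succ_isotropic => //; nra.
Qed.

Lemma estimate_sequence k :
  A k * f (x k) <= Psi k (v k) /\ forall z, Psi k (v k) <= Psi k z.
Proof.
have [tau_k A_ge0 value_k psi_k] := estimate_invariant k.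
split => // z; rewrite (psi_k z).
have : 0 <= tau k / 2 * dot (vsub z (v k)) (vsub z (v k)).
  by apply: Rmult_le_pos; [nra | exact: dot_ge0].
lra.
Qed.

Lemma A_succ_growth k :
  [/\ 0 < a (S k), (1 + mu * A (S k)) * A (S k) <= L * a (S k) ^ 2 & A (S k) = A k + a (S k)].
Proof.
have [tau_k A_ge0 _ _] := estimate_invariant k.
have [_ [_ [_ /(_ k) [_ [_ [A_succ _]]]]]] := run.
have [a_gt0 a_sq] := step_size k ltac:(nra) A_ge0.
split => //; rewrite A_succ.
by have -> : 1 + mu * (A k + a (S k)) = tau k + mu * a (S k) by rewrite tau_k; ring.
Qed.

Lemma A_ge_sq k : INR k ^ 2 / (4 * L) <= A k.
Proof.
suff A_ge : INR k ^ 2 <= 4 * L * A k.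
  have : 4 * L * (INR k ^ 2 / (4 * L)) = INR k ^ 2 by field; lra.
  move: (INR k ^ 2 / (4 * L)) => q; nra.
elim: k => [|k IH]; first by have [-> _] := run; rewrite /=; lra.
have [a_gt0 growth A_succ] := A_succ_growth k.
rewrite S_INR A_succ; apply: growth_sqrt_step => //; first exact: pos_INR.
by rewrite -A_succ; nra.
Qed.

Lemma A_ge_geometric k : 1 / L / (1 - sqrt (mu / L)) ^ k <= A (S k).
Proof.
have sqrt_lt1 : sqrt (mu / L) < 1.
  rewrite -sqrt_1; apply: sqrt_lt_1_alt; split.
    by apply/Rlt_le/Rdiv_lt_0_compat.
  by apply: (Rmult_lt_reg_r L) => //; rewrite Rmult_1_l /Rdiv Rmult_assoc Rinv_l; lra.
elim: k => [|k IH].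
  have [a_gt0 growth A_succ] := A_succ_growth 0.
  have [A0 _] := run; rewrite A_succ A0 Rplus_0_l in growth *.
  have La_ge1 : 1 <= L * a 1%nat.
    have : 0 <= a 1%nat * (L * a 1%nat - 1 - mu * a 1%nat) by nra.
    have : 0 <= mu * a 1%nat by nra.
    nra.
  have -> : 1 / L / (1 - sqrt (mu / L)) ^ 0 = / L by rewrite /=; field; lra.
  by apply: (Rmult_le_reg_l L) => //; rewrite Rinv_r; lra.
have [a_gt0 growth A_succ] := A_succ_growth (S k).
have [_ A_ge0 _ _] := estimate_invariant (S k).
have := growth_linear_step _ _ (A (S k)) (a (S (S k))) mu_gt0 mu_lt_L a_gt0.
rewrite -A_succ => /(_ ltac:(nra)) ratio.
have q_gt0 : 0 < 1 - sqrt (mu / L) by lra.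
have := pow_lt _ k q_gt0; rewrite [_ ^ S k]/=.
move: IH ratio q_gt0; move: (1 - sqrt (mu / L)) (_ ^ k) => q P IH ratio q_gt0 P_gt0.
have -> : 1 / L / (q * P) = 1 / L / P / q by field; lra.
apply: (Rmult_le_reg_r q) => //.
rewrite /Rdiv Rmult_assoc Rinv_l; lra.
Qed.

End AGMsDR_SC.

Theorem mainTheorem6 (n : nat) (f : vec n -> R) (gradf : vec n -> vec n) (L mu : R)
    (opt : bool) (x v y : nat -> vec n) (A a tau beta h : nat -> R) :
  0 < mu -> mu < L ->
  L_smooth f gradf L ->
  strongly_convex f gradf mu ->
  (forall k : nat, gradf (y k) <> (fun _ => 0)) ->
  AGMsDR_SC_run f gradf L mu opt x v y A a tau beta h ->
  (forall k : nat,
     A k * f (x k) <= psi f gradf mu (x 0%nat) a y k (v k) /\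
     (forall z, psi f gradf mu (x 0%nat) a y k (v k)
                <= psi f gradf mu (x 0%nat) a y k z)) /\
  (forall k : nat, (1 <= k)%nat ->
     A k >= INR k ^ 2 / (4 * L) /\
     A k >= 1 / L / (1 - sqrt (mu / L)) ^ (k - 1)).
Proof.
move=> mu_gt0 mu_lt_L smooth strong grad_neq0 run.
split=> [k | [//|k] _].
  exact: (estimate_sequence mu_gt0 mu_lt_L smooth strong grad_neq0 run).
have -> : (k.+1 - 1)%nat = k by rewrite subn1.
split; apply: Rle_ge.
- exact: (A_ge_sq mu_gt0 mu_lt_L smooth strong grad_neq0 run).
- exact: (A_ge_geometric mu_gt0 mu_lt_L smooth strong grad_neq0 run).
Qed.
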